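(* Let $d\ge1$, $L>0$, $N\ge1$ an integer, and let $p:[0,L]^d\to[0,\infty)$ be a probability density function that is Lipschitz continuous (w.r.t. the Euclidean norm) with constant $\ell_p$ and satisfies $p(x)>0$ for some $x\in\mathbb{X}_N^d$. Let $f:[0,L]^d\to\mathbb{R}$ be bounded and Lipschitz continuous with constant $\ell_f$, and write $\|f\|_{\mathsf{L}^\infty}=\sup_x|f(x)|$. Then $$|\mu(p)-\mu(\bar p_N)|\le 2\|f\|_{\mathsf{L}^\infty}\frac{\ell_p\sqrt d\,L^{d+1}}{N}+\ell_f\sqrt d\,\frac LN,$$ $$|\sigma^2(p)-\sigma^2(\bar p_N)|\le 6\|f\|_{\mathsf{L}^\infty}^2\frac{\ell_p\sqrt d\,L^{d+1}}{N}+4\|f\|_{\mathsf{L}^\infty}\ell_f\sqrt d\,\frac LN.$$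
   Context: $\mathbb{X}_N=\frac{L}{N}\{0,1,\dots,N-1\}$ and $\mathbb{X}_N^d\subset[0,L]^d$ is the uniform grid. The discretization $\bar p_N:\mathbb{X}_N^d\to[0,1]$ of $p$ is $\bar p_N(x)=p(x)/S$ with $S=\sum_{x\in\mathbb{X}_N^d}p(x)$. For a distribution $Q$ (a density on $[0,L]^d$ or a probability mass function on $\mathbb{X}_N^d$), $\mu(Q)=\mathbb{E}_{x\sim Q}[f(x)]$, $m_2(Q)=\mathbb{E}_{x\sim Q}[f(x)^2]$ and $\sigma^2(Q)=m_2(Q)-\mu(Q)^2$. *)

From mathcomp Require Import all_boot all_order all_algebra.
From mathcomp Require Import all_classical all_reals all_analysis.
Unset Printing Implicit Defensive.
Import Order.TTheory GRing.Theory Num.Theory.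
Local Open Scope classical_set_scope.
Local Open Scope ring_scope.

Section Defs.
Context {R : realType}.

Definition cube (d : nat) (L : R) : set 'rV[R]_d :=
  [set x | forall i, 0 <= x ord0 i <= L].

Definition eucl (d : nat) (x : 'rV[R]_d) : R :=
  Num.sqrt (\sum_(i < d) (x ord0 i) ^+ 2).

Definition lipschitz_cube (d : nat) (L : R) (g : 'rV[R]_d -> R) (l : R) : Prop :=
  forall x y, cube d L x -> cube d L y -> `|g x - g y| <= l * eucl d (x - y).

(* Integral over [0,L]^d w.r.t. d-dimensional Lebesgue measure, written as
   the iterated Lebesgue integral over [0,L] in each coordinate. *)
Fixpoint cube_int (L : R) (d : nat) : ('rV[R]_d -> R) -> R :=
  match d with
  | 0 => fun F => F 0
  | d'.+1 => fun F =>
      Rintegral lebesgue_measure `[0, L]%classic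
        (fun t : R => cube_int L d' (fun v : 'rV[R]_d' =>
                        F (row_mx (const_mx t : 'rV[R]_1) v)))
  end.

Definition is_density (d : nat) (L : R) (p : 'rV[R]_d -> R) : Prop :=
  (forall x, cube d L x -> 0 <= p x) /\ cube_int L d p = 1.

Definition grid_pt (d N : nat) (L : R) (k : {ffun 'I_d -> 'I_N}) : 'rV[R]_d :=
  \row_i (L / N%:R * (k i)%:R).

Definition gridsum (d N : nat) (L : R) (p : 'rV[R]_d -> R) : R :=
  \sum_(k : {ffun 'I_d -> 'I_N}) p (grid_pt d N L k).

Definition pbar (d N : nat) (L : R) (p : 'rV[R]_d -> R) (k : {ffun 'I_d -> 'I_N}) : R :=
  p (grid_pt d N L k) / gridsum d N L p.

Definition mu_c (d : nat) (L : R) (f p : 'rV[R]_d -> R) : R :=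
  cube_int L d (fun x => f x * p x).
Definition m2_c (d : nat) (L : R) (f p : 'rV[R]_d -> R) : R :=
  cube_int L d (fun x => f x ^+ 2 * p x).
Definition var_c (d : nat) (L : R) (f p : 'rV[R]_d -> R) : R :=
  m2_c d L f p - mu_c d L f p ^+ 2.

Definition mu_d (d N : nat) (L : R) (f p : 'rV[R]_d -> R) : R :=
  \sum_(k : {ffun 'I_d -> 'I_N}) f (grid_pt d N L k) * pbar d N L p k.
Definition m2_d (d N : nat) (L : R) (f p : 'rV[R]_d -> R) : R :=
  \sum_(k : {ffun 'I_d -> 'I_N}) f (grid_pt d N L k) ^+ 2 * pbar d N L p k.
Definition var_d (d N : nat) (L : R) (f p : 'rV[R]_d -> R) : R :=
  m2_d d N L f p - mu_d d N L f p ^+ 2.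

Definition supnorm (d : nat) (L : R) (f : 'rV[R]_d -> R) : R :=
  sup [set `|f x| | x in cube d L].

End Defs.

(* The discretization error is a Riemann-sum error.  For a Lipschitz integrand
   on [0,L]^d, comparing each grid value with the integrand on the cell
   [k h, (k+1) h] (h = L/N) of the grid point gives an error of order
   sqrt(d) h.  Applied to p this shows that h^d S is close to the integral of
   p, which is 1; applied to f p it shows that h^d times the grid sum of f p is
   close to mu(p).  Since mu(\bar p_N) is the quotient of these two grid sums,
   the bound on the means follows, and the variance bound follows from it
   applied to f and to f^2, using
   sigma^2(p) - sigma^2(\bar p_N)
     = (m_2(p) - m_2(\bar p_N)) - (mu(p) - mu(\bar p_N)) (mu(p) + mu(\bar p_N)). *)

From mathcomp Require Import all_boot all_order all_algebra.
From mathcomp Require Import all_classical all_reals all_analysis.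
From mathcomp Require Import ring lra.

Set Implicit Arguments.
Unset Strict Implicit.
Unset Printing Implicit Defensive.

Import Order.TTheory GRing.Theory Num.Theory.
Import numFieldNormedType.Exports.
Local Open Scope classical_set_scope.
Local Open Scope ring_scope.

Section Interval.
Context {R : realType}.
Local Notation mu := (@lebesgue_measure R).
Implicit Types (a b c h l x : R) (g : R -> R).

Definition lipschitz_itv a b g l :=
  forall s t, a <= s <= b -> a <= t <= b -> `|g s - g t| <= l * `|s - t|.

Lemma lipschitz_within_continuous (A : set R) g l :
  (forall s t, A s -> A t -> `|g s - g t| <= l * `|s - t|) ->
  {within A, continuous g}.
Proof.
move=> H; apply/subspace_continuousP => x Ax.
apply/cvgrPdist_le => e e0; rewrite near_withinE.
have l1 : 0 < `|l| + 1 by rewrite ltr_pwDr.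
near=> y => Ay.
apply: (le_trans (H x y Ax Ay)); apply: (le_trans (ler_wpM2r _ (ler_norm l))) => //.
apply: (@le_trans _ _ ((`|l| + 1) * `|x - y|)); first by rewrite ler_wpM2r // lerDl.
rewrite -ler_pdivlMl //.
near: y; apply/nbhs_ballP; exists (e / (`|l| + 1)) => /=; first by rewrite divr_gt0.
by move=> y; rewrite /ball /= mulrC => /ltW.
Unshelve. all: by end_near.
Qed.

Lemma lipschitz_itv_integrable a b g l :
  lipschitz_itv a b g l -> mu.-integrable `[a, b] (EFin \o g).
Proof.
move=> H; apply: continuous_compact_integrable; first exact: segment_compact.
apply: (@lipschitz_within_continuous _ _ l) => s t /=.
by rewrite !in_itv /=; apply: H.
Qed.

Lemma itv_integrable_cst a b c : mu.-integrable `[a, b] (EFin \o cst c).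
Proof.
by apply: (@lipschitz_itv_integrable _ _ _ 0) => s t _ _; rewrite subrr normr0 mul0r.
Qed.

Lemma itv_integrable_cstB a b c g : mu.-integrable `[a, b] (EFin \o g) ->
  mu.-integrable `[a, b] (EFin \o (fun s => c - g s)).
Proof. by move=> ig; exact: (integrableB _ (itv_integrable_cst a b c) ig). Qed.

Lemma fine_measure_itv_cc x y : x <= y -> fine (mu `[x, y]) = y - x.
Proof.
move=> xy; rewrite lebesgue_measure_itv /= lte_fin.
by case: ltP => //= yx; lra.
Qed.

Lemma Rintegral_cells N h g : 0 <= h ->
  mu.-integrable `[0, N%:R * h] (EFin \o g) ->
  \int[mu]_(t in `[0, N%:R * h]) g t =
  \sum_(j < N) \int[mu]_(t in `[j%:R * h, j.+1%:R * h]) g t.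
Proof.
move=> h0 ig.
pose Phi n := \int[mu]_(t in `[0, n%:R * h]) g t.
have cellE (j : 'I_N) :
    \int[mu]_(t in `[j%:R * h, j.+1%:R * h]) g t = Phi j.+1 - Phi j.
  have jN : j.+1%:R * h <= N%:R * h by rewrite ler_wpM2r // ler_nat.
  rewrite /Phi Rintegral_itvB; first last.
  - by rewrite bnd_simp ler_wpM2r // ler_nat.
  - by rewrite bnd_simp mulr_ge0.
  - by apply: integrableS ig => //; apply: subset_itvl; rewrite bnd_simp.
  rewrite Rintegral_itv_obnd_cbnd //.
  apply: integrableS ig => //; apply: subset_itv; rewrite bnd_simp //.
  by rewrite mulr_ge0.
rewrite (eq_bigr _ (fun j _ => cellE j)).
rewrite -(big_mkord xpredT (fun j => Phi j.+1 - Phi j)) telescope_sumr //.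
by rewrite /Phi mul0r set_itv1 Rintegral_set1 subr0.
Qed.

Lemma Riemann_sum_error N h (a : 'I_N -> R) (g eta : R -> R) : 0 <= h ->
  mu.-integrable `[0, N%:R * h] (EFin \o g) ->
  mu.-integrable `[0, N%:R * h] (EFin \o eta) ->
  (forall (j : 'I_N) s, j%:R * h <= s <= j.+1%:R * h -> `|a j - g s| <= eta s) ->
  `|h * \sum_(j < N) a j - \int[mu]_(t in `[0, N%:R * h]) g t|
    <= \int[mu]_(t in `[0, N%:R * h]) eta t.
Proof.
move=> h0 ig ie Ha.
rewrite (Rintegral_cells h0 ig) (Rintegral_cells h0 ie) mulr_sumr -sumrB.
apply: (le_trans (ler_norm_sum _ _ _)); apply: ler_sum => j _.
have cellS : `[j%:R * h, j.+1%:R * h] `<=` `[0, N%:R * h].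
  by apply: subset_itv; rewrite bnd_simp ?mulr_ge0 // ler_wpM2r // ler_nat.
have igj : mu.-integrable `[j%:R * h, j.+1%:R * h] (EFin \o g).
  exact: integrableS ig.
have iej : mu.-integrable `[j%:R * h, j.+1%:R * h] (EFin \o eta).
  exact: integrableS ie.
have -> : h * a j = \int[mu]_(t in `[j%:R * h, j.+1%:R * h]) a j.
  rewrite Rintegral_cst // fine_measure_itv_cc ?ler_wpM2r ?ler_nat //.
  by rewrite -mulrBl -natrB // subSnn mul1r mulrC.
rewrite -RintegralB //; last exact: itv_integrable_cst.
apply: (le_trans (le_normr_Rintegral _ _)) => //.
  exact: itv_integrable_cstB.
apply: le_Rintegral => //; first exact/integrable_norm/itv_integrable_cstB.
by move=> s /=; rewrite in_itv /=; apply: Ha.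
Qed.

End Interval.

Section Cube.
Context {R : realType}.
Local Notation mu := (@lebesgue_measure R).
Implicit Types (L s t l : R).

Definition row_cons d s (v : 'rV[R]_d) : 'rV[R]_d.+1 :=
  row_mx (const_mx s : 'rV[R]_1) v.
Arguments row_cons {d}.

Lemma row_cons0 d s (v : 'rV[R]_d) : row_cons s v ord0 ord0 = s.
Proof. by rewrite mxE; case: splitP => j //= _; rewrite mxE. Qed.

Lemma row_consS d s (v : 'rV[R]_d) (i : 'I_d) :
  row_cons s v ord0 (lift ord0 i) = v ord0 i.
Proof.
rewrite mxE; case: splitP => j /=; first by move: (ltn_ord j) => /[swap] <-.
by rewrite /bump /= add1n => -[/val_inj ->].
Qed.

Lemma row_consB d s t (v w : 'rV[R]_d) :
  row_cons s v - row_cons t w = row_cons (s - t) (v - w).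
Proof. by apply/rowP => i; rewrite !mxE; case: splitP => j _; rewrite !mxE. Qed.

Lemma eucl_row_cons d s (v : 'rV[R]_d) :
  eucl d.+1 (row_cons s v) = Num.sqrt (s ^+ 2 + eucl d v ^+ 2).
Proof.
rewrite /eucl sqr_sqrtr ?sumr_ge0 // => [|i _]; last exact: sqr_ge0.
by rewrite big_ord_recl row_cons0; under eq_bigr do rewrite row_consS.
Qed.

Lemma eucl_row_cons0s d (v : 'rV[R]_d) : eucl d.+1 (row_cons 0 v) = eucl d v.
Proof.
by rewrite eucl_row_cons expr0n add0r sqrtr_sqr ger0_norm // sqrtr_ge0.
Qed.

Lemma eucl_row_cons0v d s : eucl d.+1 (row_cons s (0 : 'rV[R]_d)) = `|s|.
Proof.
rewrite eucl_row_cons /eucl big1 ?sqrtr0 ?expr0n ?addr0 ?sqrtr_sqr //.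
by move=> i _; rewrite mxE expr0n.
Qed.

Lemma cube_row_cons d L s (v : 'rV[R]_d) :
  cube d.+1 L (row_cons s v) <-> 0 <= s <= L /\ cube d L v.
Proof.
split=> [H | [Hs Hv] i].
  by split=> [|i]; [have := H ord0 | have := H (lift ord0 i)];
    rewrite ?row_cons0 ?row_consS.
by case: (unliftP ord0 i) => [j ->|->]; rewrite ?row_consS ?row_cons0.
Qed.

Lemma lipschitz_cube_slice d L l s (F : 'rV[R]_d.+1 -> R) :
  lipschitz_cube d.+1 L F l -> 0 <= s <= L ->
  lipschitz_cube d L (fun v => F (row_cons s v)) l.
Proof.
move=> HF hs v w hv hw; have := HF (row_cons s v) (row_cons s w).
by rewrite row_consB subrr eucl_row_cons0s; apply; apply/cube_row_cons.
Qed.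

Lemma lipschitz_cube_fiber d L l (F : 'rV[R]_d.+1 -> R) (v : 'rV[R]_d) :
  lipschitz_cube d.+1 L F l -> cube d L v ->
  lipschitz_itv 0 L (fun s => F (row_cons s v)) l.
Proof.
move=> HF hv s t hs ht; have := HF (row_cons s v) (row_cons t v).
by rewrite row_consB subrr eucl_row_cons0v; apply; apply/cube_row_cons.
Qed.

Lemma lipschitz_cube_cst d L c : lipschitz_cube d L (fun=> c) 0.
Proof. by move=> x y _ _; rewrite subrr normr0 mul0r. Qed.

Lemma lipschitz_cube_lincomb d L a b lF lG (F G : 'rV[R]_d -> R) :
  lipschitz_cube d L F lF -> lipschitz_cube d L G lG ->
  lipschitz_cube d L (fun x => a * F x + b * G x) (`|a| * lF + `|b| * lG).
Proof.
move=> HF HG x y hx hy.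
rewrite opprD addrACA -!mulrBr mulrDl.
apply: (le_trans (ler_normD _ _)); rewrite !normrM.
by apply: lerD; rewrite -mulrA ler_wpM2l //; [apply: HF | apply: HG].
Qed.

Lemma lipschitz_cubeZ d L a l (F : 'rV[R]_d -> R) :
  lipschitz_cube d L F l -> lipschitz_cube d L (fun x => a * F x) (`|a| * l).
Proof. by move=> HF x y hx hy; rewrite -mulrBr normrM -mulrA ler_wpM2l ?HF. Qed.

Lemma cube_int_cst d L c : 0 <= L -> cube_int L d (fun=> c) = c * L ^+ d.
Proof.
move=> L0; elim: d c => [|d IH] c /=; first by rewrite mulr1.
under eq_Rintegral do rewrite IH.
by rewrite Rintegral_cst // fine_measure_itv_cc // subr0 exprSr mulrA.
Qed.

(* Linearity and monotonicity of the iterated integral must be proved together: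
   the slices at dimension d+1 are integrable because they are Lipschitz, and
   that needs both properties at dimension d. *)
Definition cube_int_linear_monotone d L : Prop :=
  (forall (F G : 'rV[R]_d -> R) a b lF lG,
    lipschitz_cube d L F lF -> lipschitz_cube d L G lG ->
    cube_int L d (fun x => a * F x + b * G x) =
      a * cube_int L d F + b * cube_int L d G) /\
  (forall (F G : 'rV[R]_d -> R) lF lG,
    lipschitz_cube d L F lF -> lipschitz_cube d L G lG ->
    (forall x, cube d L x -> F x <= G x) -> cube_int L d F <= cube_int L d G).

Lemma lipschitz_cube_int_slice d L l (F : 'rV[R]_d.+1 -> R) :
  0 <= L -> cube_int_linear_monotone d L -> lipschitz_cube d.+1 L F l ->
  lipschitz_itv 0 L (fun s => cube_int L d (fun v => F (row_cons s v))) (l * L ^+ d).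
Proof.
move=> L0 [Hlin Hmono] HF s t hs ht.
have Hs := lipschitz_cube_slice HF hs; have Ht := lipschitz_cube_slice HF ht.
pose D v := 1 * F (row_cons s v) + (-1) * F (row_cons t v).
have -> : cube_int L d (fun v => F (row_cons s v)) -
          cube_int L d (fun v => F (row_cons t v)) = cube_int L d D.
  by rewrite /D (Hlin _ _ _ _ _ _ Hs Ht) mul1r mulN1r.
have HD := lipschitz_cube_lincomb 1 (-1) Hs Ht.
have Dle v : cube d L v -> - (l * `|s - t|) <= D v <= l * `|s - t|.
  by move=> hv; rewrite -ler_norml /D mul1r mulN1r; apply: (lipschitz_cube_fiber HF hv).
rewrite mulrAC ler_norml -mulNr -!cube_int_cst //.
apply/andP; split; [apply: (Hmono _ D _ _ (lipschitz_cube_cst _) HD) |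
  apply: (Hmono D _ _ _ HD (lipschitz_cube_cst _))] => v /Dle /andP[] //.
Qed.

Lemma cube_int_linear_monotoneP d L : 0 <= L -> cube_int_linear_monotone d L.
Proof.
move=> L0; elim: d => [|d IH].
  by split=> [// | F G lF lG _ _ FG]; apply: FG => -[].
have [Hlin Hmono] := IH.
have islice (F : 'rV[R]_d.+1 -> R) lF : lipschitz_cube d.+1 L F lF ->
    mu.-integrable `[0, L] (EFin \o fun s => cube_int L d (fun v => F (row_cons s v))).
  by move=> HF; apply: lipschitz_itv_integrable (lipschitz_cube_int_slice L0 IH HF).
split=> [F G a b lF lG HF HG | F G lF lG HF HG FG] /=.
- rewrite -(RintegralZl a _ (islice _ _ HF)) // -(RintegralZl b _ (islice _ _ HG)) //.
  rewrite -RintegralD //; [|exact: (integrableZl _ a (islice _ _ HF))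
                           |exact: (integrableZl _ b (islice _ _ HG))].
  apply: eq_Rintegral => s /[!inE] /= /[!in_itv] /= hs.
  exact: Hlin (lipschitz_cube_slice HF hs) (lipschitz_cube_slice HG hs).
- apply: le_Rintegral => //; [exact: islice HF | exact: islice HG |].
  move=> s /= /[!in_itv] /= hs.
  apply: Hmono (lipschitz_cube_slice HF hs) (lipschitz_cube_slice HG hs) _.
  by move=> v hv; apply: FG; apply/cube_row_cons.
Qed.

Lemma cube_int_lincomb d L a b lF lG (F G : 'rV[R]_d -> R) : 0 <= L ->
  lipschitz_cube d L F lF -> lipschitz_cube d L G lG ->
  cube_int L d (fun x => a * F x + b * G x) = a * cube_int L d F + b * cube_int L d G.
Proof. by move=> /(cube_int_linear_monotoneP d) [Hlin _]; apply: Hlin. Qed.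

Lemma cube_intZ d L a l (F : 'rV[R]_d -> R) : 0 <= L ->
  lipschitz_cube d L F l -> cube_int L d (fun x => a * F x) = a * cube_int L d F.
Proof.
move=> L0 HF; have := cube_int_lincomb a 0 L0 HF HF.
by under eq_fun do rewrite mul0r addr0; rewrite mul0r addr0.
Qed.

Lemma ler_cube_int d L lF lG (F G : 'rV[R]_d -> R) : 0 <= L ->
  lipschitz_cube d L F lF -> lipschitz_cube d L G lG ->
  (forall x, cube d L x -> F x <= G x) -> cube_int L d F <= cube_int L d G.
Proof. by move=> /(cube_int_linear_monotoneP d) [_ Hmono]; apply: Hmono. Qed.

End Cube.

Definition ffun_cons (N d : nat) (j : 'I_N) (k : {ffun 'I_d -> 'I_N}) :
  {ffun 'I_d.+1 -> 'I_N} :=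
  [ffun i => if unlift ord0 i is Some i' then k i' else j].

Lemma ffun_cons0 N d j (k : {ffun 'I_d -> 'I_N}) : ffun_cons j k ord0 = j.
Proof. by rewrite ffunE unlift_none. Qed.

Lemma ffun_consS N d j (k : {ffun 'I_d -> 'I_N}) i : ffun_cons j k (lift ord0 i) = k i.
Proof. by rewrite ffunE liftK. Qed.

Lemma sum_ffun_cons (V : nmodType) N d (F : {ffun 'I_d.+1 -> 'I_N} -> V) :
  \sum_(k : {ffun 'I_d.+1 -> 'I_N}) F k =
  \sum_(j : 'I_N) \sum_(k : {ffun 'I_d -> 'I_N}) F (ffun_cons j k).
Proof.
rewrite pair_big /= (reindex (fun jk => ffun_cons jk.1 jk.2)) /=.
  by apply: eq_bigr => -[j k].
exists (fun k => (k ord0, [ffun i => k (lift ord0 i)])) => [[j k] _ | k _] /=.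
  by rewrite ffun_cons0; congr pair; apply/ffunP => i; rewrite ffunE ffun_consS.
apply/ffunP => i; case: (unliftP ord0 i) => [i' ->|->].
  by rewrite ffun_consS ffunE.
by rewrite ffun_cons0.
Qed.

Section Grid.
Context {R : realType}.
Implicit Types (L : R) (N d : nat).

Lemma grid_pt_cons N d L (j : 'I_N) (k : {ffun 'I_d -> 'I_N}) :
  grid_pt d.+1 N L (ffun_cons j k) = row_cons (L / N%:R * j%:R) (grid_pt d N L k).
Proof.
apply/rowP => i; case: (unliftP ord0 i) => [i' ->|->].
  by rewrite row_consS !mxE ffun_consS.
by rewrite row_cons0 mxE ffun_cons0.
Qed.

Definition grid_cell N d L (k : {ffun 'I_d -> 'I_N}) (t : 'rV[R]_d) :=
  forall i, (k i)%:R * (L / N%:R) <= t ord0 i <= (k i).+1%:R * (L / N%:R).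

Lemma grid_cell_cons N d L (j : 'I_N) (k : {ffun 'I_d -> 'I_N}) s t :
  j%:R * (L / N%:R) <= s <= j.+1%:R * (L / N%:R) -> grid_cell L k t ->
  grid_cell L (ffun_cons j k) (row_cons s t).
Proof.
move=> hs hkt i.
by case: (unliftP ord0 i) => [i' ->|->]; rewrite ?ffun_consS ?row_consS
  ?ffun_cons0 ?row_cons0.
Qed.

(* A Riemann sum in dimension d+1 is a one-dimensional Riemann sum, in the
   first coordinate, of d-dimensional Riemann sums of the slices. *)
Lemma cube_Riemann_sum_error N d L (G1 G2 H : 'rV[R]_d -> R) l2 lH :
  0 < L -> (0 < N)%N ->
  lipschitz_cube d L G2 l2 -> lipschitz_cube d L H lH ->
  (forall k t, grid_cell L k t -> `|G1 (grid_pt d N L k) - G2 t| <= H t) ->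
  `|(L / N%:R) ^+ d * gridsum d N L G1 - cube_int L d G2| <= cube_int L d H.
Proof.
move=> L0 N0; set h := L / N%:R.
have h0 : 0 <= h by rewrite divr_ge0 // ltW.
have LNh : L = N%:R * h by rewrite /h mulrC divfK // pnatr_eq0 -lt0n.
elim: d G1 G2 H l2 lH => [|d IH] G1 G2 H l2 lH HG2 HH Hc.
  pose k0 : {ffun 'I_0 -> 'I_N} := [ffun i => Ordinal N0].
  rewrite expr0 mul1r /gridsum (big_pred1 k0) => [|k]; first by apply: Hc => -[].
  by apply/esym/eqP/ffunP => -[].
have lm := cube_int_linear_monotoneP d (ltW L0).
pose a (j : 'I_N) := h ^+ d * gridsum d N L (fun v => G1 (row_cons (h * j%:R) v)).
have -> : h ^+ d.+1 * gridsum d.+1 N L G1 = h * \sum_(j < N) a j.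
  rewrite /a /gridsum sum_ffun_cons -mulr_sumr exprSr (mulrC _ h) -mulrA.
  by congr (_ * (_ * _)); apply: eq_bigr => j _; under eq_bigr do rewrite grid_pt_cons.
have := @Riemann_sum_error R N h a (fun s => cube_int L d (fun v => G2 (row_cons s v)))
  (fun s => cube_int L d (fun v => H (row_cons s v))) h0.
rewrite -LNh; apply.
- exact: lipschitz_itv_integrable (lipschitz_cube_int_slice (ltW L0) lm HG2).
- exact: lipschitz_itv_integrable (lipschitz_cube_int_slice (ltW L0) lm HH).
move=> j s hs.
have hsL : 0 <= s <= L.
  case/andP: hs => h1 h2; apply/andP; split; first by apply: le_trans h1; rewrite mulr_ge0.
  by apply: (le_trans h2); rewrite LNh ler_wpM2r // ler_nat.
apply: IH (lipschitz_cube_slice HG2 hsL) (lipschitz_cube_slice HH hsL) _ => k t hkt.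
by rewrite /h -grid_pt_cons; apply/Hc/grid_cell_cons.
Qed.

End Grid.

Section Geometry.
Context {R : realType}.
Implicit Types (L c l M : R) (N d : nat).

Lemma eucl_le d (x : 'rV[R]_d) c : 0 <= c ->
  (forall i, `|x ord0 i| <= c) -> eucl d x <= Num.sqrt d%:R * c.
Proof.
move=> c0 H; rewrite -(ger0_norm c0) -sqrtr_sqr -sqrtrM ?ler0n //.
rewrite ler_sqrt ?mulr_ge0 ?ler0n ?sqr_ge0 // -[d in d%:R]card_ord -sumr_const.
rewrite mulr_suml; apply: ler_sum => i _; rewrite mul1r -real_normK ?num_real //.
by rewrite lerXn2r ?nnegrE // (le_trans _ (H i)).
Qed.

Lemma cube0 d L : 0 <= L -> cube d L 0.
Proof. by move=> L0 i; rewrite mxE lexx. Qed.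

Lemma grid_cell_eucl N d L (k : {ffun 'I_d -> 'I_N}) t : 0 <= L ->
  grid_cell L k t -> eucl d (grid_pt d N L k - t) <= Num.sqrt d%:R * (L / N%:R).
Proof.
move=> L0 H; apply: eucl_le; first by rewrite divr_ge0.
move=> i; rewrite !mxE; have := H i; rewrite -natr1 mulrDl mul1r => /andP[h1 h2].
by rewrite mulrC ler_norml; apply/andP; split; lra.
Qed.

Lemma grid_cell_cube N d L (k : {ffun 'I_d -> 'I_N}) t : 0 < L -> (0 < N)%N ->
  grid_cell L k t -> cube d L t.
Proof.
move=> L0 N0 H i; have /andP[h1 h2] := H i; apply/andP; split.
  by apply: le_trans h1; rewrite mulr_ge0 // divr_ge0 // ltW.
apply: (le_trans h2); rewrite mulrA ler_pdivrMr ?ltr0n // mulrC ler_pM2l //.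
by rewrite ler_nat.
Qed.

Lemma grid_pt_cube N d L (k : {ffun 'I_d -> 'I_N}) : 0 < L -> (0 < N)%N ->
  cube d L (grid_pt d N L k).
Proof.
move=> L0 N0; apply: (grid_cell_cube (k := k)) => // i; rewrite mxE mulrC lexx /=.
by rewrite [X in X <= _]mulrC; apply: ler_wpM2r; rewrite ?ler_nat // divr_ge0 // ltW.
Qed.

Lemma lipschitz_cube_ge0 d L l (F : 'rV[R]_d -> R) : (0 < d)%N -> 0 < L ->
  lipschitz_cube d L F l -> 0 <= l.
Proof.
case: d F => // d F _ L0 HF; rewrite leNgt; apply/negP => l0.
have cL : cube d.+1 L (const_mx L) by move=> i; rewrite mxE lexx ltW.
have := HF 0 (const_mx L) (cube0 (ltW L0)) cL.
have : 0 < eucl d.+1 (0 - const_mx L).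
  rewrite sqrtr_gt0 big_ord_recl ltr_pwDl ?sumr_ge0 // => [|i _]; last exact: sqr_ge0.
  by rewrite !mxE sub0r sqrrN exprn_gt0.
by move=> e0 /(le_trans (normr_ge0 _)); rewrite pmulr_lge0 // leNgt l0.
Qed.

Lemma lipschitz_cube_bounded d L l (F : 'rV[R]_d -> R) : 0 < L -> 0 <= l ->
  lipschitz_cube d L F l -> exists2 M, 0 <= M & forall x, cube d L x -> `|F x| <= M.
Proof.
move=> L0 l0 HF; have c0 : cube d L 0 := cube0 (ltW L0).
exists (`|F 0| + l * (Num.sqrt d%:R * L)) => [|x hx].
  by rewrite addr_ge0 // !mulr_ge0 // ltW.
rewrite -[F x](subrK (F 0)) addrC (le_trans (ler_normD _ _)) // lerD2l.
apply: (le_trans (HF x 0 hx c0)); rewrite ler_wpM2l // subr0.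
by apply: eucl_le => [|i]; [exact: ltW | have /andP[? ?] := hx i; rewrite ger0_norm].
Qed.

Lemma lipschitz_cubeM d L M1 M2 l1 l2 (F G : 'rV[R]_d -> R) :
  (forall x, cube d L x -> `|F x| <= M1) -> (forall x, cube d L x -> `|G x| <= M2) ->
  lipschitz_cube d L F l1 -> lipschitz_cube d L G l2 ->
  lipschitz_cube d L (fun x => F x * G x) (M1 * l2 + M2 * l1).
Proof.
move=> HF HG LF LG x y hx hy.
have -> : F x * G x - F y * G y = F x * (G x - G y) + (F x - F y) * G y by ring.
apply: (le_trans (ler_normD _ _)); rewrite !normrM mulrDl.
apply: lerD; first by rewrite -mulrA; apply: ler_pM => //; [exact: HF | exact: LG].
by rewrite mulrC -mulrA; apply: ler_pM => //; [exact: HG | exact: LF].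
Qed.

Lemma lipschitz_cube_sqr d L M l (F : 'rV[R]_d -> R) :
  (forall x, cube d L x -> `|F x| <= M) -> lipschitz_cube d L F l ->
  lipschitz_cube d L (fun x => F x ^+ 2) (2 * M * l).
Proof.
move=> HF LF; have := lipschitz_cubeM HF HF LF LF.
by rewrite -mulrA mulr_natl mulr2n.
Qed.

Lemma supnorm_ub d L (F : 'rV[R]_d -> R) :
  (exists M, forall x, cube d L x -> `|F x| <= M) ->
  forall x, cube d L x -> `|F x| <= supnorm d L F.
Proof.
move=> [M HM] x hx; apply: ub_le_sup; last by exists x.
by exists M => _ [y hy <-]; apply: HM.
Qed.

End Geometry.

Section Moments.
Context {R : realType}.
Variables (d N : nat) (L lp : R) (p : 'rV[R]_d -> R).
Hypotheses (d_gt0 : (0 < d)%N) (L_gt0 : 0 < L) (N_gt0 : (0 < N)%N).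
Hypotheses (p_density : is_density d L p) (p_lip : lipschitz_cube d L p lp).
Hypothesis p_grid_pos : exists k : {ffun 'I_d -> 'I_N}, 0 < p (grid_pt d N L k).

Local Notation h := (L / N%:R).
Local Notation sd := (Num.sqrt d%:R).

Let p_ge0 x : cube d L x -> 0 <= p x. Proof. by case: p_density => + _; apply. Qed.
Let lp_ge0 : 0 <= lp. Proof. exact: lipschitz_cube_ge0 d_gt0 L_gt0 p_lip. Qed.
Let grid_cube k : cube d L (grid_pt d N L k). Proof. exact: grid_pt_cube. Qed.

Let grid_cell_close k t : grid_cell L k t -> eucl d (grid_pt d N L k - t) <= sd * h.
Proof. by apply: grid_cell_eucl; rewrite ltW. Qed.

Lemma gridsum_gt0 : 0 < gridsum d N L p.
Proof.
have [k0 pk0] := p_grid_pos; rewrite /gridsum (bigD1 k0) //= ltr_pwDl //.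
by apply: sumr_ge0 => k _; apply: p_ge0.
Qed.

Lemma normalizer_error : `|h ^+ d * gridsum d N L p - 1| <= lp * (sd * h) * L ^+ d.
Proof.
have := cube_Riemann_sum_error (G1 := p) (H := fun=> lp * (sd * h)) L_gt0 N_gt0 p_lip
  (lipschitz_cube_cst _).
rewrite (cube_int_cst _ _ (ltW L_gt0)) (proj2 p_density); apply=> k t hkt.
apply: le_trans (p_lip (grid_cube k) (grid_cell_cube L_gt0 N_gt0 hkt)) _.
by rewrite ler_wpM2l // grid_cell_close.
Qed.

Variables (K lphi : R) (phi : 'rV[R]_d -> R).
Hypotheses (phi_bound : forall x, cube d L x -> `|phi x| <= K).
Hypothesis phi_lip : lipschitz_cube d L phi lphi.

Let phi_p_lipschitz : exists l, lipschitz_cube d L (fun x => phi x * p x) l.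
Proof.
have [P _ p_bound] := lipschitz_cube_bounded L_gt0 lp_ge0 p_lip.
by eexists; apply: lipschitz_cubeM phi_bound p_bound phi_lip p_lip.
Qed.

Lemma pbar_ge0 k : 0 <= pbar d N L p k.
Proof. by rewrite divr_ge0 ?p_ge0 // ltW // gridsum_gt0. Qed.

Lemma sum_pbar : \sum_k pbar d N L p k = 1.
Proof. by rewrite -mulr_suml divff // gt_eqF // gridsum_gt0. Qed.

Lemma norm_mu_d_le : `|mu_d d N L phi p| <= K.
Proof.
apply: le_trans (ler_norm_sum _ _ _) _.
rewrite -[K]mulr1 -sum_pbar mulr_sumr; apply: ler_sum => k _.
by rewrite normrM (ger0_norm (pbar_ge0 k)) ler_wpM2r ?pbar_ge0 ?phi_bound.
Qed.

Lemma norm_mu_c_le : `|mu_c d L phi p| <= K.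
Proof.
have [l phip_lip] := phi_p_lipschitz.
have [_ p_int] := p_density.
have cube_int_pZ c : c = cube_int L d (fun x => c * p x).
  by rewrite (cube_intZ _ (ltW L_gt0) p_lip) p_int mulr1.
rewrite ler_norml; apply/andP; split.
- rewrite [X in X <= _]cube_int_pZ.
  apply: (ler_cube_int (ltW L_gt0) (lipschitz_cubeZ _ p_lip) phip_lip) => x hx.
  apply: ler_wpM2r; first exact: p_ge0.
  by have := phi_bound hx; rewrite ler_norml => /andP[].
- rewrite [X in _ <= X]cube_int_pZ.
  apply: (ler_cube_int (ltW L_gt0) phip_lip (lipschitz_cubeZ _ p_lip)) => x hx.
  apply: ler_wpM2r; first exact: p_ge0.
  by have := phi_bound hx; rewrite ler_norml => /andP[].
Qed.

Lemma weighted_Riemann_error :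
  `|h ^+ d * gridsum d N L (fun x => phi x * p x) - mu_c d L phi p|
    <= K * lp * (sd * h) * L ^+ d + lphi * (sd * h).
Proof.
have [l phip_lip] := phi_p_lipschitz.
have -> : K * lp * (sd * h) * L ^+ d + lphi * (sd * h) =
    cube_int L d (fun t => 1 * (K * lp * (sd * h)) + lphi * (sd * h) * p t).
  rewrite (cube_int_lincomb _ _ (ltW L_gt0) (lipschitz_cube_cst _) p_lip).
  by rewrite (cube_int_cst _ _ (ltW L_gt0)) (proj2 p_density) mul1r mulr1.
apply: (cube_Riemann_sum_error L_gt0 N_gt0 phip_lip
  (lipschitz_cube_lincomb _ _ (lipschitz_cube_cst _) p_lip)) => k t hkt.
have ht := grid_cell_cube L_gt0 N_gt0 hkt; have hk := grid_cube k.
have close := grid_cell_close hkt.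
set g := grid_pt d N L k.
have -> : phi g * p g - phi t * p t = phi g * (p g - p t) + (phi g - phi t) * p t by ring.
apply: (le_trans (ler_normD _ _)); rewrite mul1r !normrM (ger0_norm (p_ge0 ht)).
apply: lerD.
- rewrite -mulrA; apply: ler_pM => //; first exact: phi_bound.
  exact: le_trans (p_lip hk ht) (ler_wpM2l lp_ge0 close).
- apply: ler_wpM2r; first exact: p_ge0.
  apply: le_trans (phi_lip hk ht) (ler_wpM2l _ close).
  exact: lipschitz_cube_ge0 d_gt0 L_gt0 phi_lip.
Qed.

Lemma moment_error :
  `|mu_c d L phi p - mu_d d N L phi p|
    <= 2 * K * (lp * sd * L ^+ d.+1 / N%:R) + lphi * sd * h.
Proof.
set S := gridsum d N L p; set D := mu_d d N L phi p.
have DS : h ^+ d * gridsum d N L (fun x => phi x * p x) = D * (h ^+ d * S).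
  rewrite /D /mu_d /S /gridsum mulrCA mulr_suml; congr (_ * _).
  by apply: eq_bigr => k _; rewrite /pbar mulrA divfK // gt_eqF // gridsum_gt0.
have -> : mu_c d L phi p - D =
    (mu_c d L phi p - h ^+ d * gridsum d N L (fun x => phi x * p x)) +
    D * (h ^+ d * S - 1) by rewrite DS; ring.
have -> : 2 * K * (lp * sd * L ^+ d.+1 / N%:R) + lphi * sd * h =
    (K * lp * (sd * h) * L ^+ d + lphi * (sd * h)) + K * (lp * (sd * h) * L ^+ d).
  by rewrite exprSr; field; rewrite pnatr_eq0 -lt0n.
apply: (le_trans (ler_normD _ _)); rewrite normrM distrC.
by apply: lerD; [exact: weighted_Riemann_error | exact: ler_pM norm_mu_d_le normalizer_error].
Qed.

End Moments.

Lemma dist_variance_le (R : numDomainType) (a b a2 b2 M e1 e2 : R) :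
  `|a| <= M -> `|b| <= M -> `|a - b| <= e1 -> `|a2 - b2| <= e2 ->
  `|(a2 - a ^+ 2) - (b2 - b ^+ 2)| <= e2 + 2 * M * e1.
Proof.
move=> aM bM e1ab e2ab.
have -> : a2 - a ^+ 2 - (b2 - b ^+ 2) = (a2 - b2) - (a - b) * (a + b) by ring.
apply: le_trans (ler_normB _ _) _; rewrite normrM mulrC lerD // mulr_natl mulr2n.
by apply: ler_pM => //; apply: le_trans (ler_normD _ _) (lerD aM bM).
Qed.

Theorem mainTheorem12 (R : realType) (d N : nat) (L lp lf : R)
  (p f : 'rV[R]_d -> R) :
  (1 <= d)%N -> 0 < L -> (1 <= N)%N ->
  is_density d L p ->
  lipschitz_cube d L p lp ->
  (exists k : {ffun 'I_d -> 'I_N}, 0 < p (grid_pt d N L k)) ->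
  (exists M : R, forall x, cube d L x -> `|f x| <= M) ->
  lipschitz_cube d L f lf ->
  `|mu_c d L f p - mu_d d N L f p|
     <= 2 * supnorm d L f * (lp * Num.sqrt d%:R * L ^+ d.+1 / N%:R)
        + lf * Num.sqrt d%:R * (L / N%:R)
  /\
  `|var_c d L f p - var_d d N L f p|
     <= 6 * supnorm d L f ^+ 2 * (lp * Num.sqrt d%:R * L ^+ d.+1 / N%:R)
        + 4 * supnorm d L f * lf * Num.sqrt d%:R * (L / N%:R).
Proof.
move=> d_gt0 L_gt0 N_gt0 p_density p_lip p_grid_pos f_bounded f_lip.
set M := supnorm d L f.
have fM := supnorm_ub f_bounded; rewrite -/M in fM.
have M_ge0 : 0 <= M := le_trans (normr_ge0 _) (fM _ (cube0 (ltW L_gt0))).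
have f2M x : cube d L x -> `|f x ^+ 2| <= M ^+ 2.
  by move=> hx; rewrite normrX lerXn2r ?nnegrE ?fM.
have mean_err := moment_error d_gt0 L_gt0 N_gt0 p_density p_lip p_grid_pos fM f_lip.
have sq_err := moment_error d_gt0 L_gt0 N_gt0 p_density p_lip p_grid_pos f2M
  (lipschitz_cube_sqr fM f_lip).
split; first exact: mean_err.
apply: le_trans (dist_variance_le (norm_mu_c_le d_gt0 L_gt0 p_density p_lip fM f_lip)
  (norm_mu_d_le L_gt0 N_gt0 p_density p_grid_pos fM) mean_err sq_err) _.
by rewrite le_eqVlt; apply/predU1P; left; ring.
Qed.
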